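(* Let $\mathfrak S$ be a commutative Noetherian semiring. Then for every set $\sigma_{\mathfrak S}$ of ideals of $\mathfrak S$, the space $\sigma_{\mathfrak S}$ with the ideal topology is quasi-compact.
   Context: A semiring $(\mathfrak S,+,0,\cdot,1)$ has $(\mathfrak S,+,0)$ a commutative monoid, $(\mathfrak S,\cdot,1)$ a monoid, $0r=r0=0$, and two-sided distributivity; all semirings are commutative. An ideal is a nonempty proper subset closed under addition and under multiplication by elements of $\mathfrak S$. Noetherian means every ideal is finitely generated (equivalently ascending chain condition on ideals). For an ideal $\mathfrak a$, $\mathfrak a^{\uparrow}=\{\mathfrak x\in\sigma_{\mathfrak S}\mid\mathfrak a\subseteq\mathfrak x\}$; the ideal topology on $\sigma_{\mathfrak S}$ has the sets $\mathfrak a^{\uparrow}$ ($\mathfrak a$ any ideal) as a subbasis of closed sets. Quasi-compact means every open cover has a finite subcover. *)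

From mathcomp Require Import all_boot all_algebra.
From Stdlib Require List.
Set Implicit Arguments. Unset Strict Implicit. Unset Printing Implicit Defensive.
Import GRing.Theory.
Local Open Scope ring_scope.

Definition is_ideal (S : comPzSemiRingType) (a : S -> Prop) : Prop :=
  (exists x, a x) /\ (exists y, ~ a y) /\
  (forall x y, a x -> a y -> a (x + y)) /\
  (forall r x, a x -> a (r * x)).

Definition fin_gen (S : comPzSemiRingType) (gs : seq S) : S -> Prop :=
  fun x => exists rs : seq S, size rs = size gs /\
    x = \sum_(i < size gs) rs`_i * gs`_i.

Definition finitely_generated (S : comPzSemiRingType) (a : S -> Prop) : Prop :=
  exists gs : seq S, forall x, a x <-> fin_gen gs x.

Definition noetherian (S : comPzSemiRingType) : Prop :=
  forall a : S -> Prop, is_ideal a -> finitely_generated a.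

Definition up_set (S : comPzSemiRingType) (sigma : (S -> Prop) -> Prop)
  (a : S -> Prop) : (S -> Prop) -> Prop :=
  fun x => sigma x /\ (forall s, a s -> x s).

(* Open sets of the ideal topology on sigma: the topology generated by the
   complements (in sigma) of the subbasic closed sets a^up, a any ideal. *)
Inductive ideal_open (S : comPzSemiRingType) (sigma : (S -> Prop) -> Prop) :
    (((S -> Prop) -> Prop) -> Prop) :=
  | io_sub (a : S -> Prop) : is_ideal a ->
      ideal_open sigma (fun x => sigma x /\ ~ up_set sigma a x)
  | io_top : ideal_open sigma sigma
  | io_inter (U V : (S -> Prop) -> Prop) :
      ideal_open sigma U -> ideal_open sigma V ->
      ideal_open sigma (fun x => U x /\ V x)
  | io_union (F : ((S -> Prop) -> Prop) -> Prop) :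
      (forall U, F U -> ideal_open sigma U) ->
      ideal_open sigma (fun x => exists U, F U /\ U x).

Definition ideal_quasi_compact (S : comPzSemiRingType)
  (sigma : (S -> Prop) -> Prop) : Prop :=
  forall F : ((S -> Prop) -> Prop) -> Prop,
    (forall U, F U -> ideal_open sigma U) ->
    (forall x, sigma x -> exists U, F U /\ U x) ->
    exists l : list ((S -> Prop) -> Prop),
      (forall U, List.In U l -> F U) /\
      (forall x, sigma x -> exists U, List.In U l /\ U x).

From mathcomp Require Import all_boot all_algebra.
From mathcomp Require Import boolp classical_sets.
From Stdlib Require List.

(* Alexander's subbasis theorem reduces quasi-compactness to covers by
   subbasic opens D(a) = sigma \ a^up.  Given such a cover by a family A, the
   ideal generated by the union of A is finitely generated, so finitely many
   members a_1, ..., a_n of A already generate it (if it is the whole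
   semiring, 1 lies in the ideal generated by finitely many of them).  An
   ideal of sigma outside every D(a_i) contains all of them, hence every
   member of A, so it lies in no D(a) with a in A: impossible. *)

Set Implicit Arguments.
Unset Strict Implicit.
Unset Printing Implicit Defensive.

Import GRing.Theory.
Local Open Scope classical_set_scope.
Local Open Scope ring_scope.

Local Notation In := List.In.

Definition list_union (T : Type) (L : list (set T)) : set T :=
  fun x => exists U, In U L /\ U x.

Definition finite_subcover (T : Type) (K : set T) (G : set (set T)) : Prop :=
  exists L, (forall U, In U L -> G U) /\ K `<=` list_union L.

Lemma all_In_cat (T : Type) (P : T -> Prop) (L1 L2 : list T) :
  (forall u, In u (L1 ++ L2) -> P u) <->
  (forall u, In u L1 -> P u) /\ (forall u, In u L2 -> P u).
Proof.
split=> [PL|[PL1 PL2] u /List.in_app_iff[/PL1|/PL2]] //.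
by split=> u Lu; apply: PL; apply/List.in_app_iff; [left|right].
Qed.

Lemma list_union_cat (T : Type) (L1 L2 : list (set T)) x :
  list_union (L1 ++ L2) x <-> list_union L1 x \/ list_union L2 x.
Proof.
split=> [[U [/List.in_app_iff[] LU Ux]]|[] [U [LU Ux]]].
- by left; exists U.
- by right; exists U.
- by exists U; split=> //; apply/List.in_app_iff; left.
- by exists U; split=> //; apply/List.in_app_iff; right.
Qed.

Lemma chain_list_bound (T : Type) (G : set T) (C : set (set T)) (L : list T) :
  total_on C subset ->
  (forall u, In u L -> G u \/ exists2 X, C X & X u) ->
  (forall u, In u L -> G u) \/ exists2 X, C X & forall u, In u L -> G u \/ X u.
Proof.
move=> Ctot; elim: L => [|w L IH] HL; first by left.
have HwL : G w \/ exists2 X, C X & X w by apply: HL; left.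
have [u Lu|LG|[X CX LX]] := IH; first by apply: HL; right.
- case: HwL => [Gw|[X CX Xw]]; first by left=> u [<-|/LG].
  by right; exists X => // u [<-|/LG]; [right|left].
- case: HwL => [Gw|[Y CY Yw]]; first by right; exists X => // u [<-|/LX //]; left.
  have [XY|YX] := Ctot X Y CX CY.
    by right; exists Y => // u [<-|/LX [|/XY]]; [right|left|right].
  by right; exists X => // u [<-|/LX]; [right; apply: YX|].
Qed.

Lemma maximal_no_finite_subcover (T : Type) (K : set T) (F : set (set T)) :
  ~ finite_subcover K F ->
  exists M, [/\ F `<=` M, ~ finite_subcover K M &
    forall U, ~ M U ->
      exists L, (forall V, In V L -> M V) /\ K `<=` U `|` list_union L].
Proof.
move=> noF; pose P A := ~ finite_subcover K (F `|` A).
have [A [PA maxA]] : exists A, P A /\ forall B, A `<` B -> ~ P B.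
  apply: Zorn_bigcup => C CP Ctot [L [LFC KL]].
  have [LF|[X CX LFX]] := chain_list_bound Ctot LFC.
    by apply: noF; exists L.
  by apply: (CP X CX); exists L.
exists (F `|` A); split=> [U|//|U MU]; first by left.
have /contrapT[L [LM KL]] : ~ P (A `|` [set U]).
  apply: maxA; split=> [V|AU]; first by left.
  by apply: MU; right; apply: AU; right.
exists (List.filter (fun V => `[< (F `|` A) V >]) L); split.
  by move=> V /List.filter_In[_ /asboolP].
move=> y /KL[V [LV Vy]].
have [MV|MVn] := pselect ((F `|` A) V).
  by right; exists V; split=> //; apply/List.filter_In; split=> //; apply/asboolP.
by case: (LM V LV) => [FV|[AV|<-]]; [case: MVn; left|case: MVn; right|left].
Qed.

Lemma cover_by_meet (T I : Type) (K : set T) (D : I -> set T)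
    (M : set (set T)) (l : list I) :
  (forall i, In i l ->
    exists L, (forall V, In V L -> M V) /\ K `<=` D i `|` list_union L) ->
  exists L, (forall V, In V L -> M V) /\
    K `<=` (fun y => forall i, In i l -> D i y) `|` list_union L.
Proof.
elim: l => [|i l IH] Hl; first by exists nil; split=> // y _; left.
have [L1 [L1M KL1]] := Hl i (or_introl erefl).
have [L2 [L2M KL2]] := IH (fun j lj => Hl j (or_intror lj)).
exists (L1 ++ L2); split=> [|y Ky]; first exact/all_In_cat.
case: (KL1 y Ky) => [Diy|yL1]; last by right; apply/list_union_cat; left.
case: (KL2 y Ky) => [Dly|yL2]; last by right; apply/list_union_cat; right.
by left=> j [<-|/Dly].
Qed.

Section Alexander.

Variables (T I : Type) (K : set T) (D : I -> set T) (O : set (set T)).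

Hypothesis open_subbasic_nbhd : forall U, O U -> forall x, U x ->
  exists l : list I, (forall i, In i l -> D i x) /\
    forall y, K y -> (forall i, In i l -> D i y) -> U y.

Hypothesis subbasic_compact : forall A : set I,
  (forall x, K x -> exists i, A i /\ D i x) ->
  exists l, (forall i, In i l -> A i) /\
    forall x, K x -> exists i, In i l /\ D i x.

Theorem alexander_subbasis (F : set (set T)) :
  F `<=` O -> (forall x, K x -> exists U, F U /\ U x) -> finite_subcover K F.
Proof.
move=> FO Fcov; apply: contrapT => /maximal_no_finite_subcover[M [FM noM maxM]].
have Mcov x : K x -> exists i, M (D i) /\ D i x.
  move=> Kx; apply: contrapT => noDx.
  have [U [FU Ux]] := Fcov x Kx.
  have [l [lx lU]] := open_subbasic_nbhd (FO U FU) Ux.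
  have [|L [LM KL]] := @cover_by_meet _ _ K D M l.
    by move=> i li; apply: maxM => MDi; apply: noDx; exists i; split=> //; apply: lx.
  apply: noM; exists (U :: L); split=> [V [<-|/LM] //|y Ky]; first exact: FM.
  case: (KL y Ky) => [/(lU y Ky) Uy|[V [LV Vy]]]; first by exists U; split=> //; left.
  by exists V; split=> //; right.
have [l [lM lK]] := subbasic_compact Mcov.
apply: noM; exists (List.map D l); split=> [V /List.in_map_iff[i [<- /lM]] //|].
by move=> x /lK[i [li Dix]]; exists (D i); split=> //; apply: List.in_map.
Qed.

End Alexander.

Definition up_compl (S : comPzSemiRingType) (sigma : set (set S)) (a : set S) :
    set (set S) :=
  fun x => sigma x /\ ~ up_set sigma a x.

Lemma ideal_open_subbasic_nbhd (S : comPzSemiRingType) (sigma : set (set S))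
    (U : set (set S)) :
  ideal_open sigma U -> forall x, U x ->
  exists l : list (set S), (forall a, In a l -> up_compl sigma a x) /\
    forall y, sigma y -> (forall a, In a l -> up_compl sigma a y) -> U y.
Proof.
elim=> [a _ x Ux|x _|{}U V _ IHU _ IHV x [Ux Vx]|G _ IH x [W [GW Wx]]].
- by exists [:: a]; split=> [b [<-|]|y _ /(_ a (or_introl erefl))].
- by exists nil.
- have [l1 [l1x l1U]] := IHU x Ux; have [l2 [l2x l2V]] := IHV x Vx.
  exists (l1 ++ l2); split=> [|y sy /all_In_cat[l1y l2y]]; first exact/all_In_cat.
  by split; [apply: l1U|apply: l2V].
- have [l [lx lW]] := IH W GW x Wx.
  by exists l; split=> // y sy ly; exists W; split=> //; apply: lW.
Qed.

Section IdealSum.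

Variable S : comPzSemiRingType.

Definition ideal_closed (x : set S) : Prop :=
  [/\ x 0, forall a b, x a -> x b -> x (a + b) & forall r a, x a -> x (r * a)].

Lemma is_ideal_closed x : is_ideal x -> ideal_closed x.
Proof.
by move=> [[e xe] [_ [xD xM]]]; split=> //; rewrite -(mul0r e); apply: xM.
Qed.

Lemma fin_gen_nth (gs : seq S) i : (i < size gs)%N -> fin_gen gs gs`_i.
Proof.
move=> lt_i; exists [seq (j == i)%:R | j <- iota 0 (size gs)].
rewrite size_map size_iota; split=> //.
rewrite (bigD1 (Ordinal lt_i)) //= (nth_map 0%N) ?size_iota // nth_iota // eqxx.
rewrite mul1r big1 ?addr0 // => j neq_ji.
rewrite (nth_map 0%N) ?size_iota // nth_iota // add0n.
suff /negPf-> : nat_of_ord j != i by rewrite mul0r.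
by apply: contraNneq neq_ji => ji; apply/eqP/val_inj.
Qed.

Lemma fin_gen_min (gs : seq S) x :
  ideal_closed x -> (forall i, (i < size gs)%N -> x gs`_i) -> fin_gen gs `<=` x.
Proof.
move=> [x0 xD xM] xgs _ [rs [_ ->]].
by apply: (big_ind x) => // i _; apply: xM; apply: xgs.
Qed.

Lemma fin_gen1 s : fin_gen [:: 1 : S] s.
Proof. by exists [:: s]; rewrite big_ord1 mulr1. Qed.

Variable A : set (set S).

(* The ideal generated by the union of the members of A: an element belongs to
   it iff it belongs to the ideal generated by finitely many of them. *)
Definition ideal_sum : set S := fun s => exists L,
  (forall a, In a L -> A a) /\
  forall x, ideal_closed x -> (forall a, In a L -> a `<=` x) -> x s.

Lemma ideal_sum_closed : ideal_closed ideal_sum.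
Proof.
split=> [|s t [L1 [L1A sL1]] [L2 [L2A tL2]]|r s [L [LA sL]]].
- by exists nil; split=> // x [].
- exists (L1 ++ L2); split=> [|x xcl /all_In_cat[xL1 xL2]]; first exact/all_In_cat.
  by case: (xcl) => _ xD _; apply: xD; [apply: sL1|apply: tL2].
- by exists L; split=> // x xcl xL; case: (xcl) => _ _ xM; apply: xM; apply: sL.
Qed.

Lemma sub_ideal_sum a : A a -> a `<=` ideal_sum.
Proof.
move=> Aa s a_s; exists [:: a]; split=> [b [<-|[]]|x _ xa] //.
exact: xa a (or_introl erefl) s a_s.
Qed.

Lemma ideal_sum_seq (gs : seq S) :
  (forall i, (i < size gs)%N -> ideal_sum gs`_i) ->
  exists L, (forall a, In a L -> A a) /\
    forall x, ideal_closed x -> (forall a, In a L -> a `<=` x) ->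
      forall i, (i < size gs)%N -> x gs`_i.
Proof.
elim: gs => [|g gs IH] Jgs; first by exists nil.
have [L1 [L1A gL1]] := Jgs 0%N isT.
have [L2 [L2A gsL2]] := IH (fun i => Jgs i.+1).
exists (L1 ++ L2); split=> [|x xcl /all_In_cat[xL1 xL2]]; first exact/all_In_cat.
by case=> [_|i /gsL2]; [apply: gL1|apply].
Qed.

Lemma noetherian_ideal_sum_finite : noetherian S ->
  exists L, (forall a, In a L -> A a) /\
    forall x, ideal_closed x -> (forall a, In a L -> a `<=` x) ->
      forall a, A a -> a `<=` x.
Proof.
move=> noeth.
have [gs [gsJ Jgs]] : exists gs : seq S,
    (forall i, (i < size gs)%N -> ideal_sum gs`_i) /\ ideal_sum `<=` fin_gen gs.
  have [[y Jy]|Jall] := pselect (exists y, ~ ideal_sum y).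
    have Jideal : is_ideal ideal_sum.
      have [J0 JD JM] := ideal_sum_closed.
      by split; [exists 0|split; [exists y|]].
    have [gs gsE] := noeth _ Jideal.
    by exists gs; split=> [i /fin_gen_nth/gsE|s /gsE].
  exists [:: 1]; split=> [[|] // _|s _]; last exact: fin_gen1.
  by apply: contrapT => J1; apply: Jall; exists 1.
have [L [LA Lgs]] := ideal_sum_seq gsJ.
exists L; split=> // x xcl xL a Aa s a_s.
exact: (fin_gen_min xcl (Lgs x xcl xL)) (Jgs s (sub_ideal_sum Aa a_s)).
Qed.

End IdealSum.

Lemma noetherian_up_compl_compact (S : comPzSemiRingType) (sigma : set (set S)) :
  noetherian S -> (forall x, sigma x -> is_ideal x) ->
  forall A : set (set S), (forall x, sigma x -> exists a, A a /\ up_compl sigma a x) ->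
  exists L, (forall a, In a L -> A a) /\
    forall x, sigma x -> exists a, In a L /\ up_compl sigma a x.
Proof.
move=> noeth sigma_ideal A Acov.
have [L [LA LA_sub]] := noetherian_ideal_sum_finite A noeth.
exists L; split=> // x sx; apply: contrapT => noLx.
have [a [Aa [_ xa]]] := Acov x sx; apply: xa; split=> //.
apply: (LA_sub x (is_ideal_closed (sigma_ideal x sx))) => // b Lb.
apply: contrapT => bx; apply: noLx; exists b; split=> //.
by split=> // -[_ /bx].
Qed.

Theorem theorem3p7 (S : comPzSemiRingType) :
  noetherian S ->
  forall sigma : (S -> Prop) -> Prop,
    (forall x, sigma x -> is_ideal x) ->
    ideal_quasi_compact sigma.
Proof.
move=> noeth sigma sigma_ideal F F_open.
apply: (alexander_subbasis (@ideal_open_subbasic_nbhd S sigma)) => //.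
exact: noetherian_up_compl_compact.
Qed.
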